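(* $R_{static}\le R^{go}_\infty\le R^{go}_B\le R^{go}_1\le R^{ub}$ for every $B\in\mathbb N$.
   Context: Let $\mathcal X$ be a finite set, $\Delta_{\mathcal X}$ the set of probability distributions on $\mathcal X$, and $\Delta_K$ the probability simplex on $[K]$. A bandit is $\nu=(\nu_a)_{a\in[K]}\in(\Delta_{\mathcal X})^K$, all arm distributions having full support on $\mathcal X$; $D$ is KL divergence. Let $\xi_1,\dots,\xi_K$ be pairwise disjoint nonempty compact sets of bandits, $\xi=\bigcup_i\xi_i$, $i^*(\nu)=i$ iff $\nu\in\xi_i$. For $B\in\mathbb N$, with sample paths $Q^B=(Q_1,\dots,Q_B)$, $Q_l=(Q_{l,a})_a\in(\Delta_{\mathcal X})^K$, $Q^l=(Q_1,\dots,Q_l)$, allocation rules $r^B=(r_1,\dots,r_B)$ with $r_l:((\Delta_{\mathcal X})^K)^l\to\Delta_K$ arbitrary, and decision rules $J:((\Delta_{\mathcal X})^K)^B\to[K]$ arbitrary, define $$R^{go}_B=\sup_{r^B,J}\inf_{Q^B}\inf_{\nu\in\xi:\,i^*(\nu)\ne J(Q^B)}\frac1B\sum_{l=1}^B\sum_{a}r_l(Q^l)(a)D(Q_{l,a}\|\nu_a),$$ and $R^{go}_\infty=\lim_{B\to\infty}R^{go}_B$ (this limit is known to exist and to equal $\inf_{B}R^{go}_B$). Define $$R_{static}=\sup_{w\in\Delta_K}\ \inf_{a\neq a'}\ \inf_{\nu\in\xi_a,\nu'\in\xi_{a'}}\ \max_{s\in[0,1]}\ -\sum_{b\in[K]}w_b\log\Big(\sum_{x\in\mathcal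 X}\nu'_b(x)^s\nu_b(x)^{1-s}\Big),$$ the Chernoff information $C(p,q)=\max_{s\in[0,1]}-\log\sum_{x}q(x)^sp(x)^{1-s}$, and $$R^{ub}=\inf_{a\neq a'}\ \inf_{\nu\in\xi_a,\nu'\in\xi_{a'}}\ \max_{b\in[K]}C(\nu_b,\nu'_b).$$ *)

From mathcomp Require Import all_boot all_order all_algebra.
From mathcomp Require Import all_classical all_reals all_analysis.
Set Implicit Arguments. Unset Strict Implicit. Unset Printing Implicit Defensive.
Import Order.TTheory GRing.Theory Num.Theory numFieldNormedType.Exports.
Local Open Scope classical_set_scope.
Local Open Scope ring_scope.

Definition is_dist (R : realType) (T : finType) (p : T -> R) : Prop :=
  (forall t, 0 <= p t) /\ \sum_(t : T) p t = 1.

Definition is_bandit (R : realType) (K : nat) (X : finType)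
  (nu : 'I_K -> X -> R) : Prop :=
  forall a, is_dist (nu a) /\ (forall x, 0 < nu a x).

(* Compactness of a set of bandits, in the (Euclidean = product) topology
   of ('I_K -> X -> R). *)
Definition bandit_compact (R : realType) (K : nat) (X : finType)
  (A : set ('I_K -> X -> R)) : Prop :=
  compact (A : set {ptws 'I_K -> {ptws X -> R}}).

(* KL divergence D(q || p) = sum_x q(x) log(q(x)/p(x)) (terms with q(x)=0 vanish). *)
Definition KL (R : realType) (X : finType) (q p : X -> R) : R :=
  \sum_(x : X) q x * ln (q x / p x).

Definition bhatt (R : realType) (X : finType) (s : R) (p q : X -> R) : R :=
  \sum_(x : X) (q x `^ s) * (p x `^ (1 - s)).

(* Chernoff information C(p,q) = max_{s in [0,1]} - log sum_x q(x)^s p(x)^(1-s)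
   (written as a supremum, which is attained). *)
Definition chernoff (R : realType) (X : finType) (p q : X -> R) : \bar R :=
  ereal_sup [set (- ln (bhatt s p q))%:E | s in [set s : R | 0 <= s <= 1]].

Definition R_static (R : realType) (K : nat) (X : finType)
  (xi : 'I_K -> set ('I_K -> X -> R)) : \bar R :=
  ereal_sup [set v | exists w : 'I_K -> R, is_dist w /\
    v = ereal_inf [set u | exists a a' : 'I_K, a != a' /\
      u = ereal_inf [set t | exists nu nu', xi a nu /\ xi a' nu' /\
        t = ereal_sup [set (- \sum_(b < K) w b * ln (bhatt s (nu b) (nu' b)))%:E
                      | s in [set s : R | 0 <= s <= 1]]]]].

Definition R_ub (R : realType) (K : nat) (X : finType)
  (xi : 'I_K -> set ('I_K -> X -> R)) : \bar R :=
  ereal_inf [set u | exists a a' : 'I_K, a != a' /\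
    u = ereal_inf [set t | exists nu nu', xi a nu /\ xi a' nu' /\
      t = ereal_sup [set chernoff (nu b) (nu' b) | b in [set: 'I_K]]]].

(* Sample paths Q^B = (Q_1,...,Q_B) (0-indexed by 'I_B), Q_l in (Delta_X)^K. *)
Definition is_path (R : realType) (K : nat) (X : finType) (B : nat)
  (Q : 'I_B -> 'I_K -> X -> R) : Prop :=
  forall l a, is_dist (Q l a).

(* Allocation rules r^B: r_l depends only on the prefix Q^l = (Q_j)_{j <= l}
   and takes values in Delta_K. (An arbitrary function of the prefix is the
   same thing as a function of the whole path depending only on the prefix.) *)
Definition is_alloc (R : realType) (K : nat) (X : finType) (B : nat)
  (r : 'I_B -> ('I_B -> 'I_K -> X -> R) -> 'I_K -> R) : Prop :=
  (forall l Q, is_dist (r l Q)) /\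
  (forall (l : 'I_B) Q Q', (forall j : 'I_B, (j <= l)%N -> Q j = Q' j) ->
     r l Q = r l Q').

Definition go_obj (R : realType) (K : nat) (X : finType) (B : nat)
  (r : 'I_B -> ('I_B -> 'I_K -> X -> R) -> 'I_K -> R)
  (Q : 'I_B -> 'I_K -> X -> R) (nu : 'I_K -> X -> R) : R :=
  B%:R^-1 * \sum_(l < B) \sum_(a < K) r l Q a * KL (Q l a) (nu a).

Definition R_go (R : realType) (K : nat) (X : finType)
  (xi : 'I_K -> set ('I_K -> X -> R)) (B : nat) : \bar R :=
  ereal_sup [set v | exists (r : 'I_B -> ('I_B -> 'I_K -> X -> R) -> 'I_K -> R)
      (J : ('I_B -> 'I_K -> X -> R) -> 'I_K), is_alloc r /\
    v = ereal_inf [set u | exists Q, is_path Q /\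
      u = ereal_inf [set (go_obj r Q nu)%:E
                    | nu in [set nu | exists i, i != J Q /\ xi i nu]]]].

Definition R_go_inf (R : realType) (K : nat) (X : finType)
  (xi : 'I_K -> set ('I_K -> X -> R)) : \bar R :=
  lim (R_go xi @ \oo).

From Pilot Require Import Defs.
From mathcomp Require Import all_boot all_order all_algebra.
From mathcomp Require Import all_classical all_reals all_analysis.
From mathcomp Require Import ring lra zify.
Import Order.TTheory GRing.Theory Num.Theory numFieldNormedType.Exports.
Local Open Scope classical_set_scope.
Local Open Scope ring_scope.
Set Implicit Arguments. Unset Strict Implicit. Unset Printing Implicit Defensive.

(* Everything rests on Gibbs' inequality: for positive [m], [- ln (sum m) <= KL q m].
   Applied to the geometric mixture [nu'^s nu^(1-s)] it gives
   [- ln (sum nu'^s nu^(1-s)) <= (1-s) KL q nu + s KL q nu'], with equality for the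
   normalised mixture (the tilted distribution).
   - Lower bound: play a fixed [w] and declare the class that best explains the
     path; the inequality, averaged over arms and rounds, shows that rejecting a
     bandit always costs at least the static rate of [w].
   - Upper bound: choosing [s] by the intermediate value theorem so that the
     tilted distribution is equally far from [nu] and [nu'], one round of tilted
     observations costs at most the Chernoff information whichever class is
     declared.
   - Averaging an [n]-round rule over blocks of about [n / B] consecutive rounds
     gives a [B]-round rule, so [R_go n <= (n/B + B) B / n * R_go B] and
     [R_go n <= R_go 1]; with two classes or more, [0 <= R_go n <= R_ub < +oo],
     hence [R_go n] converges to its infimum, which is then [R_go_inf]. *)

Section kl_divergence.
Variables (R : realType) (X : finType).
Implicit Types (p q m : X -> R) (s : R).

Lemma ln_le_subr1 (y : R) : 0 < y -> ln y <= y - 1.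
Proof. by move=> y0; have := expR_ge1Dx (ln y); rewrite lnK ?posrE //; lra. Qed.

Lemma mul_ln_div (a b : R) : 0 <= a -> 0 < b -> a * ln (a / b) = a * ln a - a * ln b.
Proof.
move=> a0 b0; have [->|a_neq0] := eqVneq a 0; first by rewrite !mul0r subr0.
by rewrite ln_div ?posrE ?mulrBr // lt_def a_neq0.
Qed.

Lemma sub_le_mul_ln_div (a b : R) : 0 <= a -> 0 < b -> a - b <= a * ln (a / b).
Proof.
move=> a0 b0; have [->|a_neq0] := eqVneq a 0; first by rewrite !mul0r sub0r oppr_le0 ltW.
have a_gt0 : 0 < a by rewrite lt_def a_neq0.
have := ln_le_subr1 (divr_gt0 b0 a_gt0).
rewrite !ln_div ?posrE // => h.
have := ler_wpM2l a0 h; rewrite !mulrBr mulrCA divff ?gt_eqF // !mulr1; lra.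
Qed.

Lemma dist_card_gt0 q : is_dist q -> (0 < #|X|)%N.
Proof.
case=> _ q1; case: (pickP (@predT X)) => [x _|no_x]; first by apply/card_gt0P; exists x.
by move: q1; rewrite big_pred0 // => /eqP; rewrite eq_sym oner_eq0.
Qed.

Lemma sumr_pos_gt0 m : (0 < #|X|)%N -> (forall x, 0 < m x) -> 0 < \sum_x m x.
Proof.
case/card_gt0P=> x0 _ m_gt0; rewrite (bigD1 x0) //= ltr_pwDl //.
by apply: sumr_ge0 => x _; apply: ltW.
Qed.

Lemma KLE q m : is_dist q -> (forall x, 0 < m x) ->
  KL q m = \sum_x q x * ln (q x) - \sum_x q x * ln (m x).
Proof.
move=> [q0 _] m_gt0; rewrite /KL -sumrB.
by apply: eq_bigr => x _; apply: mul_ln_div.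
Qed.

Lemma oppr_ln_sum_le_KL q m : is_dist q -> (forall x, 0 < m x) ->
  - ln (\sum_x m x) <= KL q m.
Proof.
move=> qd m_gt0; have [q0 q1] := qd.
set Z := \sum_x m x.
have Z_gt0 : 0 < Z by apply: sumr_pos_gt0 => //; apply: dist_card_gt0 qd.
have mZ_gt0 x : 0 < m x / Z by rewrite divr_gt0.
have : 0 <= KL q (fun x => m x / Z).
  have : \sum_x (q x - m x / Z) <= KL q (fun x => m x / Z).
    by apply: ler_sum => x _; apply: sub_le_mul_ln_div.
  by rewrite sumrB q1 -mulr_suml divff ?gt_eqF // subrr.
rewrite !KLE //=.
have -> : \sum_x q x * ln (m x / Z) = \sum_x q x * ln (m x) - ln Z.
  rewrite -[ln Z]mul1r -q1 mulr_suml -sumrB.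
  by apply: eq_bigr => x _; rewrite ln_div ?posrE // mulrBr.
lra.
Qed.

Lemma KL_ge0 q p : is_dist q -> is_dist p -> (forall x, 0 < p x) -> 0 <= KL q p.
Proof.
by move=> qd [_ p1] p_gt0; have := oppr_ln_sum_le_KL qd p_gt0; rewrite p1 ln1 oppr0.
Qed.

Lemma KLxx p : (forall x, 0 < p x) -> KL p p = 0.
Proof. by move=> p_gt0; rewrite /KL big1 // => x _; rewrite divff ?gt_eqF // ln1 mulr0. Qed.

Definition geomix s p p' (x : X) : R := p' x `^ s * p x `^ (1 - s).

Lemma geomix_gt0 s p p' x : 0 < p x -> 0 < p' x -> 0 < geomix s p p' x.
Proof. by move=> p0 p'0; rewrite mulr_gt0 ?powR_gt0. Qed.

Lemma KL_geomix s q p p' : is_dist q -> (forall x, 0 < p x) -> (forall x, 0 < p' x) ->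
  KL q (geomix s p p') = (1 - s) * KL q p + s * KL q p'.
Proof.
move=> qd p_gt0 p'_gt0.
rewrite !KLE // => [|x]; last exact: geomix_gt0.
have -> : \sum_x q x * ln (geomix s p p' x) =
    s * \sum_x q x * ln (p' x) + (1 - s) * \sum_x q x * ln (p x).
  rewrite !mulr_sumr -big_split; apply: eq_bigr => x _ /=.
  by rewrite /geomix lnM ?posrE ?powR_gt0 // !ln_powR; ring.
ring.
Qed.

Lemma bhattE s p p' : bhatt s p p' = \sum_x geomix s p p' x.
Proof. by []. Qed.

Lemma oppr_ln_bhatt_le_KL s q p p' : is_dist q ->
  (forall x, 0 < p x) -> (forall x, 0 < p' x) ->
  - ln (bhatt s p p') <= (1 - s) * KL q p + s * KL q p'.
Proof.
move=> qd p_gt0 p'_gt0; rewrite -KL_geomix // bhattE.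
by apply: oppr_ln_sum_le_KL => // x; apply: geomix_gt0.
Qed.

Lemma chernoff_le_KL p p' : is_dist p -> is_dist p' ->
  (forall x, 0 < p x) -> (forall x, 0 < p' x) -> (Defs.chernoff p p' <= (KL p p')%:E)%E.
Proof.
move=> pd p'd p_gt0 p'_gt0; apply: ge_ereal_sup => _ [s /andP[s0 s1] <-].
rewrite lee_fin (le_trans (oppr_ln_bhatt_le_KL s pd p_gt0 p'_gt0)) //.
by rewrite KLxx // mulr0 add0r ler_piMl ?KL_ge0.
Qed.

Lemma KL_subr q p p' : is_dist q -> (forall x, 0 < p x) -> (forall x, 0 < p' x) ->
  KL q p - KL q p' = \sum_x q x * (ln (p' x) - ln (p x)).
Proof.
move=> qd p_gt0 p'_gt0; rewrite !KLE //.
under [RHS]eq_bigr do rewrite mulrBr.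
by rewrite sumrB; lra.
Qed.

Lemma continuous_powRr (a : R) : 0 < a -> continuous (fun s : R => a `^ s).
Proof.
move=> a_gt0 s; have -> : (fun s => a `^ s) = expR \o (fun s => s * ln a).
  by apply: funext => t; rewrite /powR gt_eqF.
apply: continuous_comp; last exact: continuous_expR.
by apply: continuousM; [exact: cvg_id | exact: cvg_cst].
Qed.

Section tilting.
Variables p p' : X -> R.
Hypotheses (pd : is_dist p) (p'd : is_dist p').
Hypotheses (p_gt0 : forall x, 0 < p x) (p'_gt0 : forall x, 0 < p' x).

Definition tilted s x := geomix s p p' x / bhatt s p p'.

Let bhatt_gt0 s : 0 < bhatt s p p'.
Proof. by apply: sumr_pos_gt0 => [|x]; [apply: dist_card_gt0 pd | apply: geomix_gt0]. Qed.

Lemma tilted_dist s : is_dist (tilted s).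
Proof.
split=> [x|]; first by rewrite divr_ge0 ?ltW ?geomix_gt0.
by rewrite -mulr_suml -bhattE divff ?gt_eqF.
Qed.

Lemma KL_tilted_geomix s : KL (tilted s) (geomix s p p') = - ln (bhatt s p p').
Proof.
have ratio x : tilted s x / geomix s p p' x = (bhatt s p p')^-1.
  by rewrite /tilted mulrAC divff ?gt_eqF ?geomix_gt0 ?mul1r.
rewrite /KL (eq_bigr (fun x => tilted s x * - ln (bhatt s p p'))); last first.
  by move=> x _; rewrite ratio lnV ?posrE.
by rewrite -mulr_suml (proj2 (tilted_dist s)) mul1r.
Qed.

Lemma tilted0 : tilted 0 = p.
Proof.
have g0 x : geomix 0 p p' x = p x by rewrite /geomix powRr0 subr0 powRr1 ?mul1r ?ltW.
apply: funext => x; rewrite /tilted bhattE (eq_bigr _ (fun x _ => g0 x)).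
by rewrite (proj2 pd) divr1.
Qed.

Lemma tilted1 : tilted 1 = p'.
Proof.
have g1 x : geomix 1 p p' x = p' x by rewrite /geomix subrr powRr0 powRr1 ?mulr1 ?ltW.
apply: funext => x; rewrite /tilted bhattE (eq_bigr _ (fun x _ => g1 x)).
by rewrite (proj2 p'd) divr1.
Qed.

Lemma continuous_geomix x : continuous (fun s => geomix s p p' x).
Proof.
move=> s; rewrite /geomix; apply: continuousM; first exact: continuous_powRr.
apply: (@continuous_comp _ _ _ (fun s : R => 1 - s) (fun s : R => p x `^ s)).
  by apply: continuousB; [exact: cvg_cst | exact: cvg_id].
exact: continuous_powRr.
Qed.

Lemma continuous_tilted x : continuous (fun s => tilted s x).
Proof.
move=> s; apply: (@continuousM _ _ (fun s => geomix s p p' x) (fun s => (bhatt s p p')^-1)).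
  exact: continuous_geomix.
apply: continuousV; first by rewrite gt_eqF.
apply: continuous_big => [|y _]; [exact: add_continuous | exact: continuous_geomix].
Qed.

Lemma tilted_balance : exists2 s, 0 <= s <= 1 & KL (tilted s) p = KL (tilted s) p'.
Proof.
pose g s := \sum_x tilted s x * (ln (p' x) - ln (p x)).
have gE s : g s = KL (tilted s) p - KL (tilted s) p'.
  by rewrite KL_subr //; apply: tilted_dist.
have g_cont : continuous g.
  apply: continuous_big => [|]; first exact: add_continuous.
  by move=> x _ t; apply: cvgM; [exact: continuous_tilted | exact: cvg_cst].
have g0 : g 0 <= 0 by rewrite gE tilted0 KLxx // sub0r oppr_le0 KL_ge0.
have g1 : 0 <= g 1 by rewrite gE tilted1 KLxx // subr0 KL_ge0.
have [|s s01 gs0] := @IVT _ g 0 1 0 ler01 (continuous_subspaceT g_cont).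
  by rewrite ge_min le_max g0 g1 orbT.
exists s; first by move: s01; rewrite in_itv.
by apply/eqP; rewrite -subr_eq0 -gE gs0.
Qed.

Lemma chernoff_tilted : exists q, [/\ is_dist q,
  ((KL q p)%:E <= Defs.chernoff p p')%E & ((KL q p')%:E <= Defs.chernoff p p')%E].
Proof.
have [s s01 bal] := tilted_balance; have qd := tilted_dist s.
have KLq : KL (tilted s) p = - ln (bhatt s p p').
  by rewrite -(KL_tilted_geomix s) KL_geomix // -bal; ring.
have le_chernoff : ((- ln (bhatt s p p'))%:E <= Defs.chernoff p p')%E.
  by apply: ereal_sup_ubound; exists s.
by exists (tilted s); split; rewrite // -?bal KLq.
Qed.
End tilting.
End kl_divergence.

Section rates.
Variables (R : realType) (K : nat) (X : finType).
Variable xi : 'I_K -> set ('I_K -> X -> R).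
Hypothesis xi_bandit : forall i nu, xi i nu -> is_bandit nu.

Definition static_rate (w : 'I_K -> R) : \bar R :=
  ereal_inf [set u | exists a a' : 'I_K, a != a' /\
    u = ereal_inf [set t | exists nu nu', xi a nu /\ xi a' nu' /\
      t = ereal_sup [set (- \sum_(b < K) w b * ln (bhatt s (nu b) (nu' b)))%:E
                    | s in [set s : R | 0 <= s <= 1]]]].

Definition go_value B (r : 'I_B -> ('I_B -> 'I_K -> X -> R) -> 'I_K -> R)
    (J : ('I_B -> 'I_K -> X -> R) -> 'I_K) : \bar R :=
  ereal_inf [set u | exists Q, is_path Q /\
    u = ereal_inf [set (go_obj r Q nu)%:E
                  | nu in [set nu | exists i, i != J Q /\ xi i nu]]].

Lemma R_static_le (M : \bar R) :
  (forall w, is_dist w -> (static_rate w <= M)%E) -> (R_static xi <= M)%E.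
Proof. by move=> le_M; apply: ge_ereal_sup => _ [w [wd ->]]; apply: le_M. Qed.

Lemma static_rate_le w a a' nu nu' : a != a' -> xi a nu -> xi a' nu' ->
  (static_rate w <= ereal_sup [set (- \sum_(b < K) w b * ln (bhatt s (nu b) (nu' b)))%R%:E
                              | s in [set s : R | (0 <= s <= 1)%R]])%E.
Proof.
move=> aa' xa xa'; apply: le_trans (ereal_inf_lbound _) _.
  by exists a, a'; split; last reflexivity.
by apply: ereal_inf_lbound; exists nu, nu'.
Qed.

Lemma go_value_le_R_go B r J : is_alloc r -> (@go_value B r J <= R_go xi B)%E.
Proof. by move=> ra; apply: ereal_sup_ubound; exists r, J. Qed.

Lemma R_go_le B (M : \bar R) :
  (forall r J, is_alloc r -> (@go_value B r J <= M)%E) -> (R_go xi B <= M)%E.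
Proof. by move=> le_M; apply: ge_ereal_sup => _ [r [J [ra ->]]]; apply: le_M. Qed.

Lemma go_value_le B r J Q nu i : is_path Q -> i != J Q -> xi i nu ->
  (@go_value B r J <= (go_obj r Q nu)%:E)%E.
Proof.
move=> PQ iJ xnu; apply: le_trans (ereal_inf_lbound _) _; first by exists Q.
by apply: ereal_inf_lbound; exists nu => //; exists i.
Qed.

Lemma go_value_ge B r J (c : \bar R) :
  (forall Q nu i, is_path Q -> i != J Q -> xi i nu -> (c <= (go_obj r Q nu)%:E)%E) ->
  (c <= @go_value B r J)%E.
Proof.
move=> le_c; apply: le_ereal_inf_tmp => _ [Q [PQ ->]].
by apply: le_ereal_inf_tmp => _ [nu [i [iJ xnu]] <-]; apply: (le_c Q nu i).
Qed.

Lemma go_obj_static_mix B (w : 'I_K -> R) (Q : 'I_B -> 'I_K -> X -> R) nu nu' s : (0 < B)%N ->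
  (forall a, 0 <= w a) -> is_path Q -> is_bandit nu -> is_bandit nu' ->
  - \sum_(b < K) w b * ln (bhatt s (nu b) (nu' b)) <=
  (1 - s) * go_obj (fun (_ : 'I_B) _ => w) Q nu + s * go_obj (fun (_ : 'I_B) _ => w) Q nu'.
Proof.
move=> B_gt0 w0 PQ bnu bnu'.
set c := - \sum_(b < K) _.
rewrite /go_obj mulrCA [s * (_ * _)]mulrCA -mulrDr ler_pdivlMl ?ltr0n // mulr_natl.
have -> : c *+ B = \sum_(l < B) c by rewrite sumr_const card_ord.
rewrite !mulr_sumr -big_split /=.
apply: ler_sum => l _; rewrite !mulr_sumr -big_split /= /c -sumrN.
apply: ler_sum => b _; rewrite mulrCA [s * (_ * _)]mulrCA -mulrDr -mulrN.
apply: ler_wpM2l => //; apply: oppr_ln_bhatt_le_KL; first exact: PQ.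
  by case: (bnu b).
by case: (bnu' b).
Qed.

Lemma ler_convex_max (x y s : R) : 0 <= s <= 1 -> (1 - s) * x + s * y <= Num.max x y.
Proof.
move=> /andP[s0 s1]; rewrite le_max.
by have [xy|yx] := leP x y; apply/orP; [right|left]; nra.
Qed.

Lemma static_rate_le_R_go B w : (0 < B)%N -> is_dist w -> (static_rate w <= R_go xi B)%E.
Proof.
move=> B_gt0 wd; have [i0 _] := card_gt0P (dist_card_gt0 wd).
pose r (_ : 'I_B) (_ : 'I_B -> 'I_K -> X -> R) := w.
pose m Q i := ereal_inf [set (go_obj r Q nu)%:E | nu in xi i].
pose J Q := [arg min_(i < i0) m Q i]%O.
have J_min Q i : (m Q (J Q) <= m Q i)%E.
  by rewrite /J; case: arg_minP => // j _; apply.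
apply: le_trans (go_value_le_R_go (r := r) J _); last by split=> [l Q|].
apply: go_value_ge => Q nu i PQ iJ xnu; rewrite leNgt; apply/negP => lt_nu.
have : (m Q (J Q) < static_rate w)%E.
  by apply: le_lt_trans (J_min Q i) (le_lt_trans (ereal_inf_lbound _) lt_nu); exists nu.
case/ereal_inf_lt => _ [nu' xnu' <-] lt_nu'.
have := static_rate_le w iJ xnu xnu'; apply/negP; rewrite -ltNge.
apply: le_lt_trans (_ : _ <= (Num.max (go_obj r Q nu) (go_obj r Q nu'))%:E)%E _.
  apply: ge_ereal_sup => _ [s s01 <-]; rewrite lee_fin.
  apply: le_trans (ler_convex_max _ _ s01).
  by apply: go_obj_static_mix (xi_bandit xnu) (xi_bandit xnu') => //; case: wd.
by rewrite EFin_max gt_max lt_nu lt_nu'.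
Qed.

Lemma dist_mean_le (w c : 'I_K -> R) (M : \bar R) :
  is_dist w -> (forall b, ((c b)%:E <= M)%E) -> ((\sum_b w b * c b)%:E <= M)%E.
Proof.
move=> wd; have [w0 w1] := wd; case: M => [m||] le_M; last 2 first.
- exact: leey.
- by have [b _] := card_gt0P (dist_card_gt0 wd); have := le_M b; rewrite leeNy_eq.
rewrite lee_fin -[m]mul1r -w1 mulr_suml; apply: ler_sum => b _.
by apply: ler_wpM2l; rewrite // -lee_fin.
Qed.

Lemma go_obj1 r (Q : 'I_1 -> 'I_K -> X -> R) nu :
  go_obj r Q nu = \sum_a r ord0 Q a * KL (Q ord0 a) (nu a).
Proof. by rewrite /go_obj big_ord1 invr1 mul1r. Qed.

Lemma R_go1_le_R_ub : (R_go xi 1 <= R_ub xi)%E.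
Proof.
apply: le_ereal_inf_tmp => _ [a [a' [aa' ->]]].
apply: le_ereal_inf_tmp => _ [nu [nu' [xa [xa' ->]]]].
set M := ereal_sup _.
have confusing b : exists qb, [/\ is_dist qb,
    ((KL qb (nu b))%:E <= M)%E & ((KL qb (nu' b))%:E <= M)%E].
  have [pd p_gt0] := xi_bandit xa b.
  have [p'd p'_gt0] := xi_bandit xa' b.
  have le_M : (Defs.chernoff (nu b) (nu' b) <= M)%E by apply: ereal_sup_ubound; exists b.
  have [qb [qd le1 le2]] := chernoff_tilted pd p'd p_gt0 p'_gt0.
  by exists qb; split; [| apply: le_trans le_M ..].
have [q qP] := choice confusing.
apply: R_go_le => r J ra; pose Q (_ : 'I_1) := q.
have [i [nu0 [iJ xnu0 nu0E]]] : exists i nu0, [/\ i != J Q, xi i nu0 & nu0 = nu \/ nu0 = nu'].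
  have [Ja|Ja] := eqVneq (J Q) a.
    by exists a', nu'; split; [rewrite Ja eq_sym | | right].
  by exists a, nu; split; [rewrite eq_sym | | left].
apply: le_trans (go_value_le r _ iJ xnu0) _; first by move=> l b; case: (qP b).
rewrite go_obj1; apply: dist_mean_le; first exact: (proj1 ra ord0 Q).
by move=> b; case: (qP b) => _ le1 le2; case: nu0E => ->.
Qed.

End rates.

Lemma eq_modn_window (a b m : nat) : (b < a + m)%N -> (a < b + m)%N ->
  a = b %[mod m] -> a = b.
Proof.
move=> ba ab eq_mod; have [m0|m_gt0] := posnP m; first by rewrite m0 !modn0 in eq_mod.
have eq_div : (a %/ m = b %/ m)%N.
  move: (divn_eq a m) (divn_eq b m) ab ba; rewrite eq_mod.
  move: (a %/ m)%N (b %/ m)%N (b %% m)%N => qa qb r -> -> ab ba.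
  have le_q x y : (x * m + r < y * m + r + m)%N -> (x <= y)%N.
    by rewrite addnAC ltn_add2r -mulSnr ltn_pmul2r.
  by apply/eqP; rewrite eqn_leq; apply/andP; split; apply: le_q.
by rewrite (divn_eq a m) (divn_eq b m) eq_div eq_mod.
Qed.

Section compression.
Variables (R : realType) (K : nat) (X : finType).
Variable xi : 'I_K -> set ('I_K -> X -> R).
Hypothesis xi_bandit : forall i nu, xi i nu -> is_bandit nu.
Variables (n B m : nat) (s : 'I_n -> 'I_B).
Hypotheses (n_gt0 : (0 < n)%N) (B_gt0 : (0 < B)%N) (m_gt0 : (0 < m)%N).
Hypothesis s_mono : forall j1 j2 : 'I_n, (j1 <= j2)%N -> (s j1 <= s j2)%N.
Hypothesis s_surj : forall l, exists j, s j = l.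
Hypothesis s_window : forall j1 j2, s j1 = s j2 -> (j2 < j1 + m)%N.

Local Notation path T := (T -> 'I_K -> X -> R).
Local Notation rule T := (T -> path T -> 'I_K -> R).

Definition block_card (l : 'I_B) : R := #|[pred j | s j == l]|%:R.

Definition stretch (Q : path 'I_B) : path 'I_n := fun j => Q (s j).

Definition compress (r : rule 'I_n) : rule 'I_B :=
  fun l Q a => (block_card l)^-1 * \sum_(j | s j == l) r j (stretch Q) a.

Lemma block_card_gt0 l : 0 < block_card l.
Proof.
by have [j sj] := s_surj l; rewrite ltr0n; apply/card_gt0P; exists j; rewrite inE sj.
Qed.

(* Reducing modulo [m] is injective on a block, which lies in a window of length [m]. *)
Lemma block_card_le l : block_card l <= m%:R.
Proof.
rewrite ler_nat -[m in (_ <= m)%N]card_ord.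
apply: (@leq_card_in _ _ (fun j : 'I_n => Ordinal (ltn_pmod j m_gt0))) => j1 j2.
rewrite !inE => /eqP sj1 /eqP sj2 [eq_mod]; apply/val_inj/eq_modn_window.
- by apply: s_window; rewrite sj1 sj2.
- by apply: s_window; rewrite sj1 sj2.
- exact: eq_mod.
Qed.

Lemma compress_alloc r : is_alloc r -> is_alloc (compress r).
Proof.
move=> [r_dist r_prefix]; split=> [l Q|l Q Q' eqQ].
  have r_ge0 j a : 0 <= r j (stretch Q) a by case: (r_dist j (stretch Q)).
  split=> [a|].
    by rewrite mulr_ge0 ?sumr_ge0 // invr_ge0 ltW // block_card_gt0.
  rewrite -mulr_sumr exchange_big /= (eq_bigr (fun=> 1)) => [|j _]; last first.
    by case: (r_dist j (stretch Q)).
  by rewrite sumr_const mulVf // gt_eqF // block_card_gt0.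
apply: funext => a; congr (_ * _); apply: eq_bigr => j /eqP sj.
rewrite (r_prefix j _ (stretch Q')) // => i ij.
by rewrite /stretch eqQ // -sj s_mono.
Qed.

Lemma go_obj_stretch r Q nu :
  n%:R * go_obj r (stretch Q) nu =
  \sum_(l < B) block_card l * \sum_a compress r l Q a * KL (Q l a) (nu a).
Proof.
rewrite /go_obj mulVKf ?pnatr_eq0 -?lt0n // (partition_big s xpredT) //=.
apply: eq_bigr => l _; rewrite mulr_sumr.
have block_neq0 : block_card l != 0 by rewrite gt_eqF ?block_card_gt0.
under [RHS]eq_bigr do rewrite /compress mulrA mulVKf // mulr_suml.
rewrite [RHS]exchange_big /=; apply: eq_bigr => j /eqP sj.
by apply: eq_bigr => a _; rewrite /stretch sj.
Qed.

Lemma go_obj_stretch_le r Q nu : is_alloc r -> is_path Q -> is_bandit nu ->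
  go_obj r (stretch Q) nu <= m%:R * B%:R / n%:R * go_obj (compress r) Q nu.
Proof.
move=> ra PQ bnu; have n_pos : 0 < n%:R :> R by rewrite ltr0n.
rewrite -(ler_pM2l n_pos) go_obj_stretch.
have -> : n%:R * (m%:R * B%:R / n%:R * go_obj (compress r) Q nu) =
    m%:R * (B%:R * go_obj (compress r) Q nu) by field; rewrite gt_eqF.
rewrite /go_obj mulVKf ?pnatr_eq0 -?lt0n // mulr_sumr.
apply: ler_sum => l _; apply: ler_wpM2r; last exact: block_card_le.
apply: sumr_ge0 => a _; apply: mulr_ge0; first by case: (compress_alloc ra) => /(_ l Q) [].
by have [nud nu_gt0] := bnu a; apply: KL_ge0.
Qed.

Lemma R_go_compress : (R_go xi n <= (m%:R * B%:R / n%:R)%:E * R_go xi B)%E.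
Proof.
set c := m%:R * B%:R / n%:R.
have c_gt0 : 0 < c by rewrite !mulr_gt0 ?invr_gt0 ?ltr0n.
apply: R_go_le => r J ra.
apply: (@le_trans _ _ (c%:E * go_value xi (compress r) (fun Q => J (stretch Q)))%E).
  rewrite /go_value -ereal_inf_pZl //; apply: le_ereal_inf_tmp => _ [_ [Q [PQ ->]] <-].
  rewrite -ereal_inf_pZl //; apply: le_ereal_inf_tmp => _ [_ [nu [i [iJ xnu]] <-] <-].
  apply: le_trans (go_value_le r _ iJ xnu) _; first by move=> j; apply: PQ.
  by rewrite -EFinM lee_fin go_obj_stretch_le //; apply: xi_bandit xnu.
apply: lee_wpmul2l; first by rewrite lee_fin ltW.
exact: go_value_le_R_go (compress_alloc ra).
Qed.

End compression.

Lemma block_factor_le (R : realType) (n B : nat) : (0 < n)%N ->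
  ((n %/ B + B)%N%:R * B%:R / n%:R <= 1 + B%:R ^+ 2 / n%:R :> R).
Proof.
move=> n_gt0; have n_pos : 0 < n%:R :> R by rewrite ltr0n.
rewrite natrD !mulrDl expr2 lerD2r ler_pdivrMr // mul1r -natrM ler_nat.
exact: leq_divM.
Qed.

Section block_convergence.
Variables (R : realType) (u : nat -> \bar R).
Hypothesis u_ge0 : forall n, (0 < n)%N -> (0 <= u n)%E.
Hypothesis u_le1 : forall n, (0 < n)%N -> (u n <= u 1%N)%E.
Hypothesis u1_lty : (u 1%N < +oo)%E.
Hypothesis u_block : forall B n, (0 < B)%N -> (B <= n)%N ->
  (u n <= ((n %/ B + B)%N%:R * B%:R / n%:R)%:E * u B)%E.

Let L := ereal_inf [set u n | n in [set n | (0 < n)%N]].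

Let u_fin n : (0 < n)%N -> u n \is a fin_num.
Proof. by move=> n_gt0; rewrite ge0_fin_numE ?u_ge0 // (le_lt_trans (u_le1 n_gt0)). Qed.

Let L_le n : (0 < n)%N -> (L <= u n)%E.
Proof. by move=> n_gt0; apply: ereal_inf_lbound; exists n. Qed.

Let L_fin : L \is a fin_num.
Proof.
rewrite ge0_fin_numE; first exact: le_lt_trans (L_le (ltn0Sn 0)) u1_lty.
by apply: le_ereal_inf_tmp => _ [n n_gt0 <-]; apply: u_ge0.
Qed.

Let u_le_shift B n : (0 < B)%N -> (B <= n)%N ->
  fine (u n) <= fine (u B) + B%:R ^+ 2 * fine (u B) / n%:R.
Proof.
move=> B_gt0 Bn; have n_gt0 := leq_trans B_gt0 Bn.
have uB_ge0 : 0 <= fine (u B) by rewrite fine_ge0 ?u_ge0.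
rewrite -lee_fin !fineK ?u_fin //; apply: le_trans (u_block B_gt0 Bn) _.
rewrite -(fineK (u_fin B_gt0)) -EFinM lee_fin.
apply: le_trans (ler_wpM2r uB_ge0 (block_factor_le _ _ n_gt0)) _.
by rewrite mulrDl mul1r mulrAC.
Qed.

Lemma cvg_block_bounded : u @ \oo --> L.
Proof.
rewrite -(fineK L_fin); apply/fine_cvgP; split; first by exists 1%N => // n; apply: u_fin.
apply/cvgrPdist_lt => e e_gt0.
have : (L < (fine L + e / 2)%:E)%E by rewrite -{1}(fineK L_fin) lte_fin ltrDl divr_gt0.
case/ereal_inf_lt => _ [B B_gt0 <-]; rewrite -(fineK (u_fin B_gt0)) lte_fin => uB_lt.
set uB := fine (u B) in uB_lt.
have uB_ge0 : 0 <= uB by rewrite fine_ge0 ?u_ge0.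
pose M := B%:R ^+ 2 * uB.
have M_ge0 : 0 <= M / (e / 2) by rewrite !mulr_ge0 // ltW // invr_gt0 divr_gt0.
near=> n; have Bn : (B <= n)%N by near: n; exists B.
have n_pos : 0 < n%:R :> R by rewrite ltr0n (leq_trans B_gt0).
have tail_small : B%:R ^+ 2 * uB / n%:R < e / 2.
  have : M / (e / 2) < n%:R.
    near: n; exists (Num.bound (M / (e / 2))) => // k /= Mk.
    by apply: lt_le_trans (archi_boundP M_ge0) _; rewrite ler_nat.
  by rewrite ltr_pdivrMr ?divr_gt0 // ltr_pdivrMr // [e / 2 * _]mulrC.
have L_le_un : fine L <= fine (u n).
  by rewrite -lee_fin !fineK ?u_fin ?L_le // (leq_trans B_gt0).
rewrite distrC ger0_norm ?subr_ge0 //.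
by have := u_le_shift B_gt0 Bn; rewrite -/uB /=; lra.
Unshelve. all: by end_near.
Qed.

End block_convergence.

Lemma minn_predn_lt (a B : nat) : (0 < B)%N -> (minn a B.-1 < B)%N.
Proof. by move=> B_gt0; rewrite gtn_min prednK ?leqnn ?orbT. Qed.

Lemma uniform_dist (R : realType) (k : nat) :
  (0 < k)%N -> is_dist (fun _ : 'I_k => k%:R^-1 : R).
Proof.
move=> k_gt0; split=> [a|]; first by rewrite invr_ge0 ler0n.
by rewrite sumr_const card_ord -[_ *+ k]mulr_natr mulVf // pnatr_eq0 -lt0n.
Qed.

Section go_limit.
Variables (R : realType) (K : nat) (X : finType).
Variable xi : 'I_K -> set ('I_K -> X -> R).
Hypothesis xi_bandit : forall i nu, xi i nu -> is_bandit nu.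
Hypothesis xi_nonempty : forall i, xi i !=set0.

Lemma R_go_le_R_go1 n : (0 < n)%N -> (R_go xi n <= R_go xi 1)%E.
Proof.
move=> n_gt0; have := @R_go_compress R K X xi xi_bandit n 1 n (fun=> ord0) n_gt0 erefl n_gt0.
rewrite mulr1 divff ?pnatr_eq0 -?lt0n // mul1e; apply=> // [l|j1 j2 _].
  by exists (Ordinal n_gt0); rewrite (ord1 l).
by rewrite ltn_addl.
Qed.

(* With [k = n / B], round [j] goes to block [min (j / k) (B - 1)]: blocks of [k]
   rounds, the last one also absorbing the fewer than [B] remaining rounds. *)
Lemma R_go_le_blocks B n : (0 < B)%N -> (B <= n)%N ->
  (R_go xi n <= ((n %/ B + B)%N%:R * B%:R / n%:R)%:E * R_go xi B)%E.
Proof.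
move=> B_gt0 Bn; have n_gt0 := leq_trans B_gt0 Bn.
set k := (n %/ B)%N.
have k_gt0 : (0 < k)%N by rewrite divn_gt0.
have kB_le : (k * B <= n)%N by apply: leq_divM.
have n_lt : (n < k.+1 * B)%N by apply: ltn_ceil.
pose s (j : 'I_n) : 'I_B := Ordinal (minn_predn_lt (j %/ k) B_gt0).
have div_bounds (j : nat) : (j %/ k * k <= j < (j %/ k).+1 * k)%N.
  by rewrite leq_divM ltn_ceil.
apply: (@R_go_compress _ _ _ xi xi_bandit n B _ s) => //; first by rewrite addn_gt0 B_gt0 orbT.
- move=> j1 j2 j12; have := leq_div2r k j12; rewrite /s /=.
  by move: (j1 %/ k)%N (j2 %/ k)%N => q1 q2; lia.
- move=> l; have lk_lt : (l * k < n)%N.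
    by apply: leq_trans kB_le; rewrite mulnC ltn_pmul2l.
  by exists (Ordinal lk_lt); apply: val_inj; rewrite /= mulnK // (minn_idPl _) // -ltnS prednK.
- move=> j1 j2 /(congr1 val) /=.
  have /andP[lo1 hi1] := div_bounds j1; have /andP[lo2 hi2] := div_bounds j2.
  have [jn1 jn2] := (ltn_ord j1, ltn_ord j2).
  move: (j1 %/ k)%N (j2 %/ k)%N lo1 hi1 lo2 hi2 => q1 q2.
  move: (nat_of_ord j1) (nat_of_ord j2) jn1 jn2 => x1 x2; nia.
Qed.

Lemma go_obj_ge0 B r (Q : 'I_B -> 'I_K -> X -> R) nu :
  is_alloc r -> is_path Q -> is_bandit nu -> 0 <= go_obj r Q nu.
Proof.
move=> [r_dist _] PQ bnu; apply: mulr_ge0; first by rewrite invr_ge0.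
apply: sumr_ge0 => l _; apply: sumr_ge0 => a _; have [nud nu_gt0] := bnu a.
by rewrite mulr_ge0 ?KL_ge0 //; case: (r_dist l Q).
Qed.

Lemma R_go_ge0 (i0 : 'I_K) n : (0 <= R_go xi n)%E.
Proof.
have K_gt0 : (0 < K)%N := leq_ltn_trans (leq0n i0) (ltn_ord i0).
pose r (_ : 'I_n) (_ : 'I_n -> 'I_K -> X -> R) (_ : 'I_K) := K%:R^-1 : R.
have ra : is_alloc r by split=> // l Q; apply: uniform_dist.
apply: le_trans (go_value_le_R_go xi (fun=> i0) ra).
apply: go_value_ge => Q nu i PQ _ xnu; rewrite lee_fin.
exact: go_obj_ge0 ra PQ (xi_bandit xnu).
Qed.

Lemma R_ub_lty (a a' : 'I_K) : a != a' -> (R_ub xi < +oo)%E.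
Proof.
move=> aa'; have [nu xa] := xi_nonempty a; have [nu' xa'] := xi_nonempty a'.
apply: (@le_lt_trans _ _ (\sum_b KL (nu b) (nu' b))%:E); last exact: ltey.
apply: le_trans (ereal_inf_lbound _) _; first by exists a, a'; split; last reflexivity.
apply: le_trans (ereal_inf_lbound _) _; first by exists nu, nu'; do 2 split => //.
apply: ge_ereal_sup => _ [b _ <-].
have [pd p_gt0] := xi_bandit xa b; have [p'd p'_gt0] := xi_bandit xa' b.
apply: le_trans (chernoff_le_KL pd p'd p_gt0 p'_gt0) _.
rewrite lee_fin (bigD1 b) //= lerDl sumr_ge0 // => c _.
have [qd q_gt0] := xi_bandit xa c; have [q'd q'_gt0] := xi_bandit xa' c.
exact: KL_ge0.
Qed.

Lemma R_go_cvg : R_go xi @ \oo --> ereal_inf [set R_go xi n | n in [set n | (0 < n)%N]].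
Proof.
set L := ereal_inf _.
have [[a [a' aa']]|no_pair] := pselect (exists a a' : 'I_K, a != a').
  apply: cvg_block_bounded.
  - by move=> n _; exact: (R_go_ge0 a n).
  - exact: R_go_le_R_go1.
  - exact: le_lt_trans (R_go1_le_R_ub xi_bandit) (R_ub_lty aa').
  - exact: R_go_le_blocks.
(* Otherwise [R_go n] is eventually constant: [+oo] for one class (no pair to separate),
   [-oo] for none (no decision rule exists). *)
have [i0 _|no_arm] := pickP (@predT 'I_K).
  have K_gt0 : (0 < K)%N := leq_ltn_trans (leq0n i0) (ltn_ord i0).
  have static_pinfty : static_rate xi (fun=> K%:R^-1) = +oo%E.
    by apply/ereal_inf_pinfty => u [a [a' [aa' _]]]; case: no_pair; exists a, a'.
  have go_pinfty n : (0 < n)%N -> R_go xi n = +oo%E.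
    move=> n_gt0; apply/eqP; rewrite eq_le leey /= -static_pinfty.
    by apply: static_rate_le_R_go => //; apply: uniform_dist.
  have -> : L = +oo%E by apply/ereal_inf_pinfty => x [n n_gt0 <-]; rewrite go_pinfty.
  by apply: cvg_near_cst; exists 1%N => // n; apply: go_pinfty.
have go_ninfty n : R_go xi n = -oo%E.
  by apply/ereal_sup_ninfty => x [r [J _]]; have := no_arm (J (fun _ _ _ => 0)).
have -> : L = -oo%E.
  by apply/eqP; rewrite -leeNy_eq -(go_ninfty 1); apply: ereal_inf_lbound; exists 1%N.
by apply: cvg_near_cst; exists 0%N => // n _; apply: go_ninfty.
Qed.

End go_limit.

Theorem mainTheorem2 (R : realType) (K : nat) (X : finType)
  (xi : 'I_K -> set ('I_K -> X -> R))
  (xi_bandit : forall i nu, xi i nu -> is_bandit nu)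
  (xi_nonempty : forall i, xi i !=set0)
  (xi_compact : forall i, bandit_compact (xi i))
  (xi_disj : forall i j, i != j -> xi i `&` xi j = set0)
  (B : nat) (hB : (0 < B)%N) :
  (R_static xi <= R_go_inf xi <= R_go xi B)%E /\
  (R_go xi B <= R_go xi 1 <= R_ub xi)%E.
Proof.
have R_go_infE : R_go_inf xi = ereal_inf [set R_go xi n | n in [set n | (0 < n)%N]].
  exact/cvg_lim/R_go_cvg.
rewrite R_go_infE; split; apply/andP; split.
- apply: le_ereal_inf_tmp => _ [n n_gt0 <-]; apply: R_static_le => w wd.
  exact: static_rate_le_R_go.
- by apply: ereal_inf_lbound; exists B.
- exact: R_go_le_R_go1.
- exact: R_go1_le_R_ub.
Qed.
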